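(* Let $f\in C^1(\mathbb{R}^n,\mathbb{R}^n)$ and let $x_0$ be a nondegenerate $T$-periodic limit cycle of $\dot x=f(x)$, $T>0$. Assume that the adjoint system $\dot z=-(f'(x_0(t)))^*z$ has $n$ linearly independent eigenfunctions, namely $z_1,\dots,z_{n-1}$, which are not $T$-periodic, and a $T$-periodic eigenfunction $z_0$ normalized so that $\langle\dot x_0(0),z_0(0)\rangle=1$. Then for every $t\in\mathbb{R}$ the last column of the matrix $\big((z_1(t),\dots,z_{n-1}(t),z_0(t))^{-1}\big)^*$ equals $\dot x_0(t)$.
   Context: Nondegenerate: the characteristic multiplier $+1$ of the linearized system $\dot y=f'(x_0(t))y$ (eigenvalue $1$ of $Y(T)$, $Y$ the fundamental matrix with $Y(0)=I$) has algebraic multiplicity $1$. An eigenfunction of a linear $T$-periodic system is a nonzero solution $z$ with $z(t+T)=\rho z(t)$ for all $t\in\mathbb{R}$ and some $\rho\in\mathbb{R}$. $^*$ denotes transpose; $(z_1(t),\dots,z_{n-1}(t),z_0(t))$ is the $n\times n$ matrix with these columns. *)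

(* Phase space R^n is rendered as row
   vectors 'rV[R]_n (the convention of MathComp-Analysis' jacobian 'J, which
   satisfies 'D_v f a = v *m 'J f a, so that the usual Jacobian matrix f'(a)
   is ('J f a)^T). *)
From mathcomp Require Import all_boot all_order all_algebra all_classical all_reals all_analysis.
Set Implicit Arguments. Unset Strict Implicit. Unset Printing Implicit Defensive.
Import numFieldNormedType.Exports.
Import Order.TTheory GRing.Theory Num.Theory.
Local Open Scope ring_scope.
Local Open Scope classical_set_scope.

Definition is_C1 {R : realType} {n : nat} (f : 'rV[R]_n -> 'rV[R]_n) : Prop :=
  (forall x, differentiable f x) /\ continuous (fun x : 'rV[R]_n => 'J f x).

Definition is_solution {R : realType} {n : nat}
  (f : 'rV[R]_n -> 'rV[R]_n) (x : R -> 'rV[R]_n) : Prop :=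
  forall t : R, is_derive t (1 : R) x (f (x t)).

Definition is_periodic {R : realType} {V : Type} (T : R) (x : R -> V) : Prop :=
  forall t, x (t + T) = x t.

Definition periodic_solution {R : realType} {n : nat}
  (f : 'rV[R]_n -> 'rV[R]_n) (y : R -> 'rV[R]_n) : Prop :=
  is_solution f y /\ (exists t s, y t != y s) /\
  exists S : R, 0 < S /\ is_periodic S y.

Definition limit_cycle {R : realType} {n : nat}
  (f : 'rV[R]_n -> 'rV[R]_n) (x0 : R -> 'rV[R]_n) (T : R) : Prop :=
  0 < T /\ is_solution f x0 /\ is_periodic T x0 /\ (exists t s, x0 t != x0 s) /\
  exists e : R, 0 < e /\
    forall y, periodic_solution f y ->
      (forall t, exists s, `|y t - x0 s| < e) -> range y = range x0.

Definition jac {R : realType} {n : nat} (f : 'rV[R]_n -> 'rV[R]_n) (a : 'rV[R]_n)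
  : 'M[R]_n := ('J f a)^T.

(* Nondegeneracy: the fundamental matrix Y of y' = f'(x0 t) y with Y(0) = I
   has the characteristic multiplier 1 (eigenvalue 1 of Y(T)) with algebraic
   multiplicity 1. *)
Definition nondegenerate_cycle {R : realType} {n : nat}
  (f : 'rV[R]_n -> 'rV[R]_n) (x0 : R -> 'rV[R]_n) (T : R) : Prop :=
  exists Y : R -> 'M[R]_n,
    (forall t : R, is_derive t (1 : R) Y (jac f (x0 t) *m Y t)) /\ Y 0 = 1%:M /\
    mup 1 (char_poly (Y T)) = 1%N.

(* z (a row vector standing for the column vector z(t)) solves the adjoint
   system z' = -(f'(x0 t))^* z, i.e. in row form z' = - z *m f'(x0 t). *)
Definition adjoint_solution {R : realType} {n : nat}
  (f : 'rV[R]_n -> 'rV[R]_n) (x0 : R -> 'rV[R]_n) (z : R -> 'rV[R]_n) : Prop :=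
  forall t : R, is_derive t (1 : R) z (- (z t *m jac f (x0 t))).

Definition adjoint_eigenfunction {R : realType} {n : nat}
  (f : 'rV[R]_n -> 'rV[R]_n) (x0 : R -> 'rV[R]_n) (T : R) (z : R -> 'rV[R]_n) : Prop :=
  adjoint_solution f x0 z /\ (exists t, z t != 0) /\
  exists rho : R, forall t, z (t + T) = rho *: z t.

Definition col_matrix {R : realType} {n : nat} (zs : 'I_n -> R -> 'rV[R]_n) (t : R)
  : 'M[R]_n := \matrix_(i < n, j < n) zs j t 0 i.

Definition dotv {R : realType} {n : nat} (u v : 'rV[R]_n) : R :=
  \sum_(i < n) u 0 i * v 0 i.

From mathcomp Require Import all_boot all_order all_algebra all_classical all_reals all_analysis.
From mathcomp Require Import lra.
Set Implicit Arguments.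
Unset Strict Implicit.
Unset Printing Implicit Defensive.
Import numFieldNormedType.Exports.
Import Order.TTheory GRing.Theory Num.Theory.
Local Open Scope ring_scope.
Local Open Scope classical_set_scope.

(* Differentiating along the cycle, <x0', z>' = <f'(x0) x0', z> - <x0', f'(x0)^* z> = 0,
   so <x0'(t), z_j(t)> is a constant c_j.  If z_j has multiplier rho, the T-periodicity
   of x0 gives c_j = rho c_j, so c_j = 0 unless z_j is T-periodic; the normalisation
   gives c_0 = 1.  Hence x0'(t)^* Z(t) = e_n^* for Z(t) = (z_1(t), ..., z_{n-1}(t), z_0(t)).
   Z(t) is invertible because solutions of a linear system that are independent as
   functions are independent at every time (a Gronwall estimate on |u|^2 shows that
   a solution vanishing at one time vanishes identically), and transposing
   x0'(t)^* = e_n^* Z(t)^-1 gives the claim. *)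

Section CalculusAlongCurves.
Variable R : realType.

Lemma is_derive_coord (n : nat) (u : R -> 'rV[R]_n) (t : R) (du : 'rV[R]_n) (i : 'I_n) :
  is_derive t (1 : R) u du -> is_derive t (1 : R) (fun s => u s 0 i) (du 0 i).
Proof.
case=> ud <-.
have L : (fun h : R => h^-1 *: ((fun s => u s 0 i) (h *: 1 + t) - u t 0 i)) @ 0^'
   --> ('D_1 u t) 0 i.
  have -> : (fun h : R => h^-1 *: ((fun s => u s 0 i) (h *: 1 + t) - u t 0 i)) =
     (fun M : 'rV[R]_n => M 0 i) \o (fun h : R => h^-1 *: (u (h *: 1 + t) - u t)).
    by apply/funext => h /=; rewrite !mxE.
  by apply: cvg_comp; [exact: ud | exact: coord_continuous].
apply: DeriveDef; first by apply/cvg_ex; exists (('D_1 u t) 0 i).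
exact: cvg_lim L.
Qed.

Lemma is_derive_comp_jacobian (n : nat) (f : 'rV[R]_n -> 'rV[R]_n) (x : R -> 'rV[R]_n)
    (t : R) (dx : 'rV[R]_n) :
  differentiable f (x t) -> is_derive t (1 : R) x dx ->
  is_derive t (1 : R) (f \o x) (dx *m 'J f (x t)).
Proof.
move=> df [xd <-].
have dxd : differentiable x t by apply/derivable1_diffP.
have dc := differentiable_comp dxd df.
apply: DeriveDef; first exact: diff_derivable.
by rewrite deriveE // diff_comp //= -deriveE // -deriveEjacobian // -deriveE.
Qed.

Lemma continuous_sum (n : nat) (F : 'I_n -> R -> R) :
  (forall i, continuous (F i)) -> continuous (fun t => \sum_(i < n) F i t).
Proof.
move=> Fc; rewrite -fct_sumE.
elim/big_ind: _ => // [x | g h gc hc x]; first exact: cvg_cst.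
exact: cvgD (gc x) (hc x).
Qed.

Lemma solution_continuous (n : nat) (f : 'rV[R]_n -> 'rV[R]_n) (x : R -> 'rV[R]_n) :
  is_solution f x -> continuous x.
Proof.
move=> xsol s; apply/differentiable_continuous/derivable1_diffP.
by case: (xsol s).
Qed.

End CalculusAlongCurves.

Section InnerProduct.
Variables (R : realType) (n : nat).
Implicit Types (u v : 'rV[R]_n) (B : 'M[R]_n).

Lemma dotvC u v : dotv u v = dotv v u.
Proof. by apply: eq_bigr => i _; rewrite mulrC. Qed.

Lemma dotvZr u v (r : R) : dotv u (r *: v) = r * dotv u v.
Proof. by rewrite /dotv mulr_sumr; apply: eq_bigr => i _; rewrite mxE mulrCA. Qed.

Lemma dotv_mulmx_tr u v : dotv u v = (u *m v^T) 0 0.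
Proof. by rewrite mxE; apply: eq_bigr => i _; rewrite mxE. Qed.

Lemma dotv_ge0 u : 0 <= dotv u u.
Proof. by apply: sumr_ge0 => i _; rewrite -expr2 sqr_ge0. Qed.

Lemma sqr_coord_le_dotv u k : u 0 k * u 0 k <= dotv u u.
Proof.
rewrite /dotv (bigD1 k) //= lerDl.
by apply: sumr_ge0 => i _; rewrite -expr2 sqr_ge0.
Qed.

Lemma dotv_eq0 u : dotv u u = 0 -> u = 0.
Proof.
move=> u0; apply/rowP => k; rewrite mxE.
by have := sqr_coord_le_dotv u k; rewrite u0; nra.
Qed.

Lemma normr_coord_mul_le_dotv u k l : `|u 0 k| * `|u 0 l| <= dotv u u.
Proof.
have sqr_normr (a : R) : `|a| * `|a| = a * a.
  by rewrite -normrM ger0_norm // -expr2 sqr_ge0.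
have := sqr_coord_le_dotv u k; have := sqr_coord_le_dotv u l.
rewrite -(sqr_normr (u 0 k)) -(sqr_normr (u 0 l)).
have := normr_ge0 (u 0 k); have := normr_ge0 (u 0 l).
by case: (leP `|u 0 k| `|u 0 l|); nra.
Qed.

Lemma normr_dotv_mulmx_le u B :
  `|dotv u (u *m B)| <= (\sum_(i < n) \sum_(j < n) `|B i j|) * dotv u u.
Proof.
have -> : dotv u (u *m B) = \sum_(k < n) u 0 k * \sum_(l < n) u 0 l * B l k.
  by apply: eq_bigr => k _; rewrite mxE.
apply: (le_trans (ler_norm_sum _ _ _)).
rewrite exchange_big /= mulr_suml; apply: ler_sum => k _.
rewrite normrM; apply: (le_trans (ler_wpM2l (normr_ge0 _) (ler_norm_sum _ _ _))).
rewrite mulr_sumr mulr_suml; apply: ler_sum => l _.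
rewrite normrM mulrA [X in _ <= X]mulrC.
exact: ler_wpM2r (normr_coord_mul_le_dotv u k l).
Qed.

Lemma is_derive_dotv (u v : R -> 'rV[R]_n) (t : R) (du dv : 'rV[R]_n) :
  is_derive t (1 : R) u du -> is_derive t (1 : R) v dv ->
  is_derive t (1 : R) (fun s => dotv (u s) (v s)) (dotv (u t) dv + dotv du (v t)).
Proof.
move=> hu hv.
have -> : (fun s => dotv (u s) (v s)) =
    \sum_(i < n) ((fun s => u s 0 i) * (fun s => v s 0 i)).
  by apply/funext => s; rewrite fct_sumE.
have := @is_derive_sum R R R n (fun i => (fun s => u s 0 i) * (fun s => v s 0 i)) t 1
  (fun i => u t 0 i *: dv 0 i + v t 0 i *: du 0 i)
  (fun i => is_deriveM (is_derive_coord i hu) (is_derive_coord i hv)).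
move/is_derive_eq; apply.
rewrite /dotv -big_split /=; apply: eq_bigr => i _.
by rewrite [du 0 i * _]mulrC.
Qed.

End InnerProduct.

Section Gronwall.
Variable R : realType.

Lemma is_derive_expR_weight (g : R -> R) (dg K s : R) :
  is_derive s (1 : R) g dg ->
  is_derive s (1 : R) (fun r => g r * expR (K * r)) (expR (K * s) * (dg + K * g s)).
Proof.
move=> hg.
have hl : is_derive s (1 : R) (fun r : R => K * r) K.
  apply: is_derive_eq (is_deriveZ K (@is_derive_id R R^o s 1)) _.
  by rewrite /GRing.scale /= mulr1.
have he : is_derive s (1 : R) (expR \o (fun r : R => K * r)) (expR (K * s) * K).
  exact: is_derive1_comp.
apply: is_derive_eq (is_deriveM hg he) _.
by rewrite /GRing.scale /=; lra.
Qed.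

Lemma expR_weight_ndecr (g dg : R -> R) (K a b : R) : a <= b ->
  (forall s, is_derive s (1 : R) g (dg s)) ->
  (forall s, a < s < b -> 0 <= dg s + K * g s) ->
  g a * expR (K * a) <= g b * expR (K * b).
Proof.
move=> ab gd dg_ge0.
have phid s := is_derive_expR_weight K (gd s).
apply: (@ger0_derive1_ndecr R (fun r => g r * expR (K * r)) a b) => //.
- move=> s; rewrite in_itv /= => sab; rewrite derive1E; have [_ ->] := phid s.
  by rewrite mulr_ge0 ?expR_ge0 ?dg_ge0.
- apply/continuous_subspaceT => s; apply/differentiable_continuous/derivable1_diffP.
  by case: (phid s).
Qed.

Lemma nonneg_gronwall_zero (g dg k : R -> R) (t0 t1 : R) :
  continuous k -> (forall s, is_derive s (1 : R) g (dg s)) -> (forall s, 0 <= g s) ->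
  (forall s, `|dg s| <= k s * g s) -> g t0 = 0 -> g t1 = 0.
Proof.
move=> kc gd g_ge0 dg_le g0; apply/eqP; rewrite eq_le g_ge0 andbT.
case: (leP t0 t1) => ht.
- have [c _ kmax] := EVT_max ht (continuous_subspaceT kc).
  have := @expR_weight_ndecr (fun s => - g s) (fun s => - dg s) (- k c) t0 t1 ht
    (fun s => is_deriveN (gd s)).
  have e := expR_gt0 (- k c * t1); rewrite g0 oppr0 mul0r.
  suff /[swap]/[apply] : forall s, t0 < s < t1 -> 0 <= - dg s + - k c * - g s by nra.
  move=> s /andP[s0 s1]; have := kmax s; rewrite in_itv /= (ltW s0) (ltW s1) => /(_ isT).
  have := dg_le s; have := ler_norm (dg s); have := g_ge0 s; nra.
- have [c _ kmax] := EVT_max (ltW ht) (continuous_subspaceT kc).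
  have := @expR_weight_ndecr g dg (k c) t1 t0 (ltW ht) gd.
  have e := expR_gt0 (k c * t1); rewrite g0 mul0r.
  suff /[swap]/[apply] : forall s, t1 < s < t0 -> 0 <= dg s + k c * g s by nra.
  move=> s /andP[s0 s1]; have := kmax s; rewrite in_itv /= (ltW s0) (ltW s1) => /(_ isT).
  have := dg_le s; have := ler_norm (- dg s); rewrite normrN; have := g_ge0 s; nra.
Qed.

End Gronwall.

Section LinearSystems.
Variables (R : realType) (n : nat) (B : R -> 'M[R]_n).
Hypothesis B_continuous : forall i j, continuous (fun t => B t i j).

Lemma linear_ode_zero (u : R -> 'rV[R]_n) (t0 : R) :
  (forall t, is_derive t (1 : R) u (u t *m B t)) -> u t0 = 0 -> forall t, u t = 0.
Proof.
move=> ud u0 t; apply: dotv_eq0.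
pose h s := \sum_(i < n) \sum_(j < n) `|B s i j|.
have hc : continuous (fun s => 2 * h s).
  have h_cont : continuous h.
    apply: (continuous_sum (F := fun i s => \sum_(j < n) `|B s i j|)) => i.
    apply: (continuous_sum (F := fun j s => `|B s i j|)) => j r.
    by apply: cvg_norm; exact: B_continuous.
  by move=> s; apply: cvgM; [exact: cvg_cst | exact: h_cont].
have gd s : is_derive s (1 : R) (fun r => dotv (u r) (u r)) (2 * dotv (u s) (u s *m B s)).
  apply: is_derive_eq (is_derive_dotv (ud s) (ud s)) _.
  by rewrite [dotv (_ *m _) _]dotvC -mulr2n mulr_natl.
apply: (nonneg_gronwall_zero (t0 := t0) t hc gd (fun s => dotv_ge0 (u s))) => [s|].
  by rewrite normrM ger0_norm // -mulrA ler_wpM2l // normr_dotv_mulmx_le.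
by rewrite u0 /dotv big1 // => i _; rewrite mxE mul0r.
Qed.

Lemma col_matrix_unitmx (zs : 'I_n -> R -> 'rV[R]_n) :
  (forall j t, is_derive t (1 : R) (zs j) (zs j t *m B t)) ->
  (forall c : 'I_n -> R, (forall t, \sum_(i < n) c i *: zs i t = 0) ->
     forall i, c i = 0) ->
  forall t, col_matrix zs t \in unitmx.
Proof.
move=> zd indep t; rewrite unitmxE unitfE -det_tr.
apply/negP => /det0P [v /negP v_neq0 v_ker]; apply: v_neq0.
pose u r := \sum_(j < n) v 0 j *: zs j r.
have ud r : is_derive r (1 : R) u (u r *m B r).
  have -> : u = \sum_(j < n) (v 0 j \*: zs j) by apply/funext => r'; rewrite fct_sumE.
  apply: is_derive_eq (@is_derive_sum R R^o _ n (fun j => v 0 j \*: zs j) r 1 _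
    (fun j => is_deriveZ (v 0 j) (zd j r))) _.
  rewrite fct_sumE mulmx_suml; apply: eq_bigr => j _ /=.
  by rewrite -scalemxAl.
have ut : u t = 0.
  apply/rowP => k; move/rowP/(_ k): v_ker; rewrite !mxE => vk.
  rewrite summxE; apply: etrans vk.
  by apply: eq_bigr => j _; rewrite !mxE.
have v0 := indep _ (linear_ode_zero ud ut).
by apply/eqP/rowP => j; rewrite v0 mxE.
Qed.

End LinearSystems.

Lemma col_tr_invmx (R : comUnitRingType) (n : nat) (Z : 'M[R]_n) (a : 'rV[R]_n) (j : 'I_n) :
  Z \in unitmx -> a *m Z = delta_mx 0 j -> col j (invmx Z)^T = a^T.
Proof. by move=> Zu aZ; rewrite -tr_row rowE -aZ mulmxK. Qed.

Section AdjointAlongSolutions.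
Variables (R : realType) (n : nat) (f : 'rV[R]_n -> 'rV[R]_n) (x : R -> 'rV[R]_n).
Hypotheses (f_diff : forall a, differentiable f a) (x_sol : is_solution f x).

Lemma derive1_solution (s : R) : derive1 x s = f (x s).
Proof. by rewrite derive1E; have [_ ->] := x_sol s. Qed.

Lemma adjoint_solution_linear (z : R -> 'rV[R]_n) : adjoint_solution f x z ->
  forall t, is_derive t (1 : R) z (z t *m - jac f (x t)).
Proof. by move=> zsol t; rewrite mulmxN; exact: zsol. Qed.

Lemma adjoint_coef_continuous : is_C1 f ->
  forall i j, continuous (fun t => (- jac f (x t)) i j).
Proof.
move=> [_ Jc] i j t.
have -> : (fun t => (- jac f (x t)) i j) = (fun t => - 'J f (x t) j i).
  by apply/funext => r; rewrite !mxE.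
apply: cvgN; apply: (@continuous_comp _ _ _ x (fun M => 'J f M j i)).
  exact: solution_continuous x_sol t.
apply: (@continuous_comp _ _ _ (jacobian f) (fun M : 'M[R]_n => M j i)).
  exact: Jc.
exact: coord_continuous.
Qed.

Lemma dotv_adjoint_const (z : R -> 'rV[R]_n) : adjoint_solution f x z ->
  forall s, dotv (f (x s)) (z s) = dotv (f (x 0)) (z 0).
Proof.
move=> zsol s.
apply: (@is_derive_0_is_cst R (fun s => dotv ((f \o x) s) (z s))) => r.
have fxd := is_derive_comp_jacobian (f_diff (x r)) (x_sol r).
apply: is_derive_eq (is_derive_dotv fxd (zsol r)) _.
rewrite !dotv_mulmx_tr /jac /= linearN /= trmx_mul trmxK mulmxN mulmxA !mxE.
by rewrite addNr.
Qed.

Lemma dotv_adjoint_eigenfunction (T : R) (z : R -> 'rV[R]_n) :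
  is_periodic T x -> adjoint_eigenfunction f x T z -> ~ is_periodic T z ->
  forall s, dotv (f (x s)) (z s) = 0.
Proof.
move=> xper [zsol [_ [rho zmul]]] znper s; rewrite dotv_adjoint_const //.
have := dotv_adjoint_const zsol T; rewrite -[T]add0r xper zmul dotvZr.
have [//|c_neq0 rhoc] := eqVneq (dotv (f (x 0)) (z 0)) 0.
have rho1 : rho = 1 by apply: (mulIf c_neq0); rewrite mul1r.
by exfalso; apply: znper => r; rewrite zmul rho1 scale1r.
Qed.

End AdjointAlongSolutions.

Lemma mulmx_col_matrixE (R : realType) (n : nat) (a : 'rV[R]_n)
    (zs : 'I_n -> R -> 'rV[R]_n) (t : R) (j : 'I_n) :
  (a *m col_matrix zs t) 0 j = dotv a (zs j t).
Proof. by rewrite mxE; apply: eq_bigr => k _; rewrite mxE. Qed.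

Theorem lemma3 (R : realType) (m : nat) (f : 'rV[R]_m.+1 -> 'rV[R]_m.+1)
  (x0 : R -> 'rV[R]_m.+1) (T : R) (zs : 'I_m.+1 -> R -> 'rV[R]_m.+1) :
  is_C1 f ->
  limit_cycle f x0 T ->
  nondegenerate_cycle f x0 T ->
  (forall i, adjoint_eigenfunction f x0 T (zs i)) ->
  (forall c : 'I_m.+1 -> R, (forall t, \sum_(i < m.+1) c i *: zs i t = 0) ->
     forall i, c i = 0) ->
  (forall i : 'I_m.+1, i != ord_max -> ~ is_periodic T (zs i)) ->
  is_periodic T (zs ord_max) ->
  dotv (derive1 x0 0) (zs ord_max 0) = 1 ->
  forall t : R, col ord_max ((invmx (col_matrix zs t))^T) = (derive1 x0 t)^T.
Proof.
move=> fC1 [_ [xsol [xper _]]] _ zeig indep nonper _ norm1 t.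
have fdiff := fC1.1.
have Zunit : col_matrix zs t \in unitmx.
  apply: (col_matrix_unitmx (adjoint_coef_continuous xsol fC1)) => // j.
  exact/(adjoint_solution_linear (zeig j).1).
have fxZ : f (x0 t) *m col_matrix zs t = delta_mx 0 ord_max.
  apply/rowP => j; rewrite mulmx_col_matrixE !mxE /=.
  have [->|j_neq] := eqVneq j ord_max.
    by rewrite (dotv_adjoint_const fdiff xsol (zeig _).1) -(derive1_solution xsol).
  exact: (dotv_adjoint_eigenfunction fdiff xsol xper (zeig j) (nonper j j_neq)).
by rewrite (derive1_solution xsol) (col_tr_invmx Zunit fxZ).
Qed.
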